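(* Let $(A,m,1,\Delta',\varepsilon,T)$ be a commutative Hopf algebra over a field $k$, with $\Delta'(a)=a_{1'}\otimes a_{2'}$. Assume that $(A,A)$ (both copies being this Hopf algebra) is a Hopf matched pair with coactions $\rho(a)=a_{(-1)}\otimes a_{(0)}$ and $\varphi(a)=a_{[0]}\otimes a_{[1]}$ such that for all $a\in A$ $$a_{1'}\otimes a_{2'}=a_{1'(-1)}a_{2'[0]}\otimes a_{1'(0)}a_{2'[1]}.$$ Then $(A,\Delta,\Delta')$ is a commutative Hopf brace, where the first Hopf algebra structure $(A,m,1,\Delta,\varepsilon,S)$ is given by $$\Delta(a)=a_1\otimes a_2=a_{1'}T(a_{2'(-1)})\otimes a_{2'(0)},\qquad S(a)=a_{(-1)}T(a_{(0)}),$$ for all $a\in A$.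
   Context: All objects are over a field $k$. Hopf matched pair: for Hopf algebras $A$ and $H$, a pair $(A,H)$ with linear maps $\rho:A\to H\otimes A$, $\rho(a)=a_{(-1)}\otimes a_{(0)}$, and $\varphi:H\to H\otimes A$, $\varphi(h)=h_{[0]}\otimes h_{[1]}$, such that $(A,\rho)$ is a left $H$-comodule algebra, $(H,\varphi)$ is a right $A$-comodule algebra (coactions are algebra maps), and for all $a\in A,h\in H$ (with comultiplications written $x_1\otimes x_2$): (HM1) $a_{(-1)}\varepsilon_A(a_{(0)})=\varepsilon_A(a)1_H$, $\varepsilon_H(h_{[0]})h_{[1]}=\varepsilon_H(h)1_A$; (HM2) $a_{(-1)}\otimes a_{(0)1}\otimes a_{(0)2}=a_{1(-1)}a_{2(-1)[0]}\otimes a_{1(0)}a_{2(-1)[1]}\otimes a_{2(0)}$; (HM3) $h_{[0]1}\otimes h_{[0]2}\otimes h_{[1]}=h_{1[0]}\otimes h_{1[1](-1)}h_{2[0]}\otimes h_{1[1](0)}h_{2[1]}$; (HM4) $h_{[0]}a_{(-1)}\otimes h_{[1]}a_{(0)}=a_{(-1)}h_{[0]}\otimes a_{(0)}h_{[1]}$. A Hopf brace $(A,\Delta,\Delta')$ consists of an algebra with two Hopf algebra structures $(A,m,1,\Delta,\varepsilon,S)$ and $(A,m,1,\Delta',\epsilon,T)$ such that for all $h$: $h_{1'}\otimes h_{2'1}\otimes h_{2'2}=h_{11'}S(h_2)h_{31'}\otimes h_{12'}\otimes h_{32'}$ (where $\Delta(h)=h_1\otimes h_2$, $\Delta'(h)=h_{1'}\otimes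 h_{2'}$ and e.g. $h_{31'}$ is $\Delta'$ applied to $h_3$); it is commutative if $A$ is commutative. *)

From HB Require Import structures.
From mathcomp Require Import all_boot all_order all_algebra.
Set Implicit Arguments. Unset Strict Implicit. Unset Printing Implicit Defensive.
Import GRing.Theory.
Local Open Scope ring_scope.

(* Tensors are represented by finite lists of elementary tensors
   (seq (X * Y) stands for  sum_i x_i (x) y_i ).  Two such representatives
   are equal in X (x) Y iff they are identified by every bilinear map into
   every k-vector space (universal property of the tensor product). *)

Section Tensors.
Variable k : fieldType.

Definition bilinear_map (X Y V : lmodType k) (f : X -> Y -> V) : Prop :=
  (forall (y : Y) (c : k) (x1 x2 : X), f (c *: x1 + x2) y = c *: f x1 y + f x2 y) /\
  (forall (x : X) (c : k) (y1 y2 : Y), f x (c *: y1 + y2) = c *: f x y1 + f x y2).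

Definition trilinear_map (X Y Z V : lmodType k) (f : X -> Y -> Z -> V) : Prop :=
  (forall (y : Y) (z : Z) (c : k) (x1 x2 : X),
      f (c *: x1 + x2) y z = c *: f x1 y z + f x2 y z) /\
  (forall (x : X) (z : Z) (c : k) (y1 y2 : Y),
      f x (c *: y1 + y2) z = c *: f x y1 z + f x y2 z) /\
  (forall (x : X) (y : Y) (c : k) (z1 z2 : Z),
      f x y (c *: z1 + z2) = c *: f x y z1 + f x y z2).

Definition teq2 (X Y : lmodType k) (s t : seq (X * Y)) : Prop :=
  forall (V : lmodType k) (f : X -> Y -> V), bilinear_map f ->
    \sum_(p <- s) f p.1 p.2 = \sum_(p <- t) f p.1 p.2.

Definition teq3 (X Y Z : lmodType k) (s t : seq (X * Y * Z)) : Prop :=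
  forall (V : lmodType k) (f : X -> Y -> Z -> V), trilinear_map f ->
    \sum_(p <- s) f p.1.1 p.1.2 p.2 = \sum_(p <- t) f p.1.1 p.1.2 p.2.

Definition tscale (X Y : lmodType k) (c : k) (s : seq (X * Y)) : seq (X * Y) :=
  [seq (c *: p.1, p.2) | p <- s].

Definition tmul (X Y : algType k) (s t : seq (X * Y)) : seq (X * Y) :=
  [seq (p.1 * q.1, p.2 * q.2) | p <- s, q <- t].

Definition tlinear (X Y Z : lmodType k) (F : X -> seq (Y * Z)) : Prop :=
  forall (c : k) (a b : X), teq2 (F (c *: a + b)) (tscale c (F a) ++ F b).

Definition talg_map (X Y Z : algType k) (F : X -> seq (Y * Z)) : Prop :=
  (forall a b : X, teq2 (F (a * b)) (tmul (F a) (F b))) /\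
  teq2 (F 1) [:: (1, 1)].

End Tensors.

Section Hopf.
Variable k : fieldType.

Record is_hopf (A : algType k) (D : A -> seq (A * A)) (e : A -> k) (S : A -> A)
  : Prop := IsHopf {
  hopf_D_lin : tlinear D;
  hopf_coassoc : forall a : A,
      teq3 [seq (q.1, q.2, p.2) | p <- D a, q <- D p.1]
           [seq (p.1, q.1, q.2) | p <- D a, q <- D p.2];
  hopf_e_lin : forall (c : k) (a b : A), e (c *: a + b) = c * e a + e b;
  hopf_counitl : forall a : A, \sum_(p <- D a) e p.1 *: p.2 = a;
  hopf_counitr : forall a : A, \sum_(p <- D a) e p.2 *: p.1 = a;
  hopf_D_alg : talg_map D;
  hopf_e_mul : forall a b : A, e (a * b) = e a * e b;
  hopf_e1 : e 1 = 1;
  hopf_S_lin : forall (c : k) (a b : A), S (c *: a + b) = c *: S a + S b;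
  hopf_antipodel : forall a : A, \sum_(p <- D a) S p.1 * p.2 = e a *: 1;
  hopf_antipoder : forall a : A, \sum_(p <- D a) p.1 * S p.2 = e a *: 1
}.

Record is_left_comodule_algebra (H A : algType k)
  (DH : H -> seq (H * H)) (eH : H -> k) (rho : A -> seq (H * A)) : Prop := {
  lca_lin : tlinear rho;
  lca_coassoc : forall a : A,
      teq3 [seq (q.1, q.2, p.2) | p <- rho a, q <- DH p.1]
           [seq (p.1, q.1, q.2) | p <- rho a, q <- rho p.2];
  lca_counit : forall a : A, \sum_(p <- rho a) eH p.1 *: p.2 = a;
  lca_alg : talg_map rho
}.

Record is_right_comodule_algebra (H A : algType k)
  (DA : A -> seq (A * A)) (eA : A -> k) (phi : H -> seq (H * A)) : Prop := {
  rca_lin : tlinear phi;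
  rca_coassoc : forall h : H,
      teq3 [seq (q.1, q.2, p.2) | p <- phi h, q <- phi p.1]
           [seq (p.1, q.1, q.2) | p <- phi h, q <- DA p.2];
  rca_counit : forall h : H, \sum_(p <- phi h) eA p.2 *: p.1 = h;
  rca_alg : talg_map phi
}.

Record is_hopf_matched_pair (A H : algType k)
  (DA : A -> seq (A * A)) (eA : A -> k)
  (DH : H -> seq (H * H)) (eH : H -> k)
  (rho : A -> seq (H * A)) (phi : H -> seq (H * A)) : Prop := {
  hmp_rho : is_left_comodule_algebra DH eH rho;
  hmp_phi : is_right_comodule_algebra DA eA phi;
  hm1a : forall a : A, \sum_(p <- rho a) eA p.2 *: p.1 = eA a *: 1;
  hm1b : forall h : H, \sum_(p <- phi h) eH p.1 *: p.2 = eH h *: 1;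
  hm2 : forall a : A,
      teq3 [seq (p.1, q.1, q.2) | p <- rho a, q <- DA p.2]
           (flatten [seq [seq (u.1 * w.1, u.2 * w.2, v.2)
                           | u <- rho p.1, w <- phi v.1]
                    | p <- DA a, v <- rho p.2]);
  hm3 : forall h : H,
      teq3 [seq (q.1, q.2, p.2) | p <- phi h, q <- DH p.1]
           (flatten [seq [seq (g.1, u.1 * w.1, u.2 * w.2)
                           | u <- rho g.2, w <- phi p.2]
                    | p <- DH h, g <- phi p.1]);
  hm4 : forall (a : A) (h : H),
      teq2 [seq (w.1 * v.1, w.2 * v.2) | w <- phi h, v <- rho a]
           [seq (v.1 * w.1, v.2 * w.2) | w <- phi h, v <- rho a]
}.

(* Hopf brace (A, D, D') : (A,m,1,D,e,S) and (A,m,1,D',e,T) Hopf algebras and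
   h_1' (x) h_2'1 (x) h_2'2 = h_11' S(h_2) h_31' (x) h_12' (x) h_32'. *)
Definition is_hopf_brace (A : algType k)
  (D : A -> seq (A * A)) (S : A -> A)
  (D' : A -> seq (A * A)) (T : A -> A) (e : A -> k) : Prop :=
  is_hopf D e S /\ is_hopf D' e T /\
  forall h : A,
    teq3 [seq (p.1, q.1, q.2) | p <- D' h, q <- D p.2]
         (flatten [seq [seq (u.1 * S t.1.2 * w.1, u.2, w.2)
                         | u <- D' t.1.1, w <- D' t.2]
                  | t <- [seq (q.1, q.2, p.2) | p <- D h, q <- D p.1]]).

Definition is_commutative_hopf_brace (A : algType k)
  (D : A -> seq (A * A)) (S : A -> A)
  (D' : A -> seq (A * A)) (T : A -> A) (e : A -> k) : Prop :=
  is_hopf_brace D S D' T e /\ (forall a b : A, a * b = b * a).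

End Hopf.

From mathcomp Require Import all_boot all_order all_algebra.
From mathcomp Require Import ring.
Import GRing.Theory.
Local Open Scope ring_scope.
Set Implicit Arguments. Unset Strict Implicit. Unset Printing Implicit Defensive.

(* Write a_1 ⊗ a_2 for the new coproduct Δ and x_(-1) ⊗ x_(0) for ρ.  Because A is a
   comodule over the Hopf algebra (A, Δ', T), the twist x ⊗ y ↦ x y_(-1) ⊗ y_(0) is
   invertible with inverse x ⊗ y ↦ x T(y_(-1)) ⊗ y_(0), and Δ is the image of Δ' under
   this inverse.  (HM2) together with the factorization of Δ' through ρ and φ makes ρ a
   coalgebra map for Δ:  b_(-1) ⊗ Δ(b_(0)) = b_1(-1) b_2(-1) ⊗ b_1(0) ⊗ b_2(0).  Hence a
   single invertible three-fold twist carries both (Δ ⊗ id)Δ and (id ⊗ Δ)Δ to the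
   corresponding iterates of Δ', and Δ is coassociative.  S is multiplicative and a right
   convolution inverse of the identity, which forces S ∘ S = id and then the left antipode
   law.  Both sides of the brace identity reduce to h_1 h_2(-1) h_3(-1) ⊗ h_2(0) ⊗ h_3(0),
   the right-hand side through  S(c_1) c_2 1' ⊗ c_2 2' = c_(-1) ⊗ c_(0). *)

Section LinearFun.
Variable k : fieldType.

Section Basics.
Variables (U V : lmodType k) (f : U -> V).
Hypothesis lin_f : linear f.

Lemma linear_fun0 : f 0 = 0.
Proof. by have := zmod_morphism_linear lin_f 0 0; rewrite !subrr. Qed.

Lemma linear_funD x y : f (x + y) = f x + f y.
Proof. by have := lin_f 1 x y; rewrite !scale1r. Qed.

Lemma linear_funZ c x : f (c *: x) = c *: f x.
Proof. exact: scalable_linear. Qed.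

Lemma linear_fun_sum I (s : seq I) (F : I -> U) :
  f (\sum_(i <- s) F i) = \sum_(i <- s) f (F i).
Proof.
elim: s => [|i s IHs]; first by rewrite !big_nil linear_fun0.
by rewrite !big_cons linear_funD IHs.
Qed.

End Basics.

Section Closure.
Variables (U V W : lmodType k).

Lemma linear_id : linear (fun x : U => x).
Proof. by []. Qed.

Lemma linear_comp (g : V -> W) (h : U -> V) :
  linear g -> linear h -> linear (fun x => g (h x)).
Proof. by move=> lg lh c x y; rewrite lh lg. Qed.

Lemma linear_sum_fun I (s : seq I) (G : I -> U -> V) :
  (forall i, linear (G i)) -> linear (fun x => \sum_(i <- s) G i x).
Proof.
move=> lG c x y; elim: s => [|i s IHs]; first by rewrite !big_nil scaler0 addr0.
by rewrite !big_cons IHs lG scalerDr addrACA.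
Qed.

Lemma linear_mull (R : algType k) (a : R) (h : U -> R) :
  linear h -> linear (fun x => a * h x).
Proof. by move=> lh c x y; rewrite lh mulrDr scalerAr. Qed.

Lemma linear_mulr (R : algType k) (a : R) (h : U -> R) :
  linear h -> linear (fun x => h x * a).
Proof. by move=> lh c x y; rewrite lh mulrDl scalerAl. Qed.

End Closure.

Section Multilinear.
Variables (U X Y Z V : lmodType k).

Lemma bilinear_mapP (f : X -> Y -> V) :
  (forall y, linear (f^~ y)) -> (forall x, linear (f x)) -> bilinear_map f.
Proof. by split. Qed.

Lemma trilinear_mapP (f : X -> Y -> Z -> V) :
  (forall y z, linear (fun x => f x y z)) -> (forall x z, linear (fun y => f x y z)) ->
  (forall x y, linear (f x y)) -> trilinear_map f.
Proof. by split. Qed.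

Lemma bilinear_linearl (f : X -> Y -> V) y (h : U -> X) :
  bilinear_map f -> linear h -> linear (fun x => f (h x) y).
Proof. by case=> lf _ lh c a b; rewrite lh lf. Qed.

Lemma bilinear_linearr (f : X -> Y -> V) x (h : U -> Y) :
  bilinear_map f -> linear h -> linear (fun y => f x (h y)).
Proof. by case=> _ lf lh c a b; rewrite lh lf. Qed.

Lemma trilinear_linear1 (f : X -> Y -> Z -> V) y z (h : U -> X) :
  trilinear_map f -> linear h -> linear (fun x => f (h x) y z).
Proof. by case=> lf _ lh c a b; rewrite lh lf. Qed.

Lemma trilinear_linear2 (f : X -> Y -> Z -> V) x z (h : U -> Y) :
  trilinear_map f -> linear h -> linear (fun y => f x (h y) z).
Proof. by case=> _ [lf _] lh c a b; rewrite lh lf. Qed.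

Lemma trilinear_linear3 (f : X -> Y -> Z -> V) x y (h : U -> Z) :
  trilinear_map f -> linear h -> linear (fun z => f x y (h z)).
Proof. by case=> _ [_ lf] lh c a b; rewrite lh lf. Qed.

Lemma linear_tensor_sum (F : X -> seq (Y * Z)) (G : Y * Z -> V) (h : U -> X) :
  tlinear F -> linear h ->
  (forall z, linear (fun y => G (y, z))) -> (forall y, linear (fun z => G (y, z))) ->
  linear (fun a => \sum_(p <- F (h a)) G p).
Proof.
move=> lF lh lG1 lG2 c x y; rewrite lh.
have sumG s : \sum_(p <- s) G p = \sum_(p <- s) G (p.1, p.2) by apply: eq_bigr => -[].
rewrite !sumG (lF c (h x) (h y) _ (fun u v => G (u, v))) ?big_cat ?big_map /=; last by split.
by rewrite scaler_sumr; congr (_ + _); apply: eq_bigr => p _; rewrite (linear_funZ (lG1 _)).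
Qed.

End Multilinear.
End LinearFun.

Create HintDb tlinear.
Create HintDb linear.

Ltac linearity :=
  repeat match goal with
  | H : bilinear_map ?f |- bilinear_map ?f => exact: H
  | H : trilinear_map ?f |- trilinear_map ?f => exact: H
  | |- bilinear_map _ => apply: bilinear_mapP
  | |- trilinear_map _ => apply: trilinear_mapP
  | |- forall _, _ => move=> ? /=
  | |- linear _ => first
      [ apply: linear_id
      | apply: linear_sum_fun
      | apply: linear_tensor_sum; first by auto with tlinear
      | apply: linear_mull
      | apply: linear_mulr
      | apply: linear_comp; first by auto with linear ]
  | H : trilinear_map _ |- linear _ => first
      [ apply: (trilinear_linear1 _ _ H) | apply: (trilinear_linear2 _ _ H)
      | apply: (trilinear_linear3 _ _ H) ]
  | H : bilinear_map _ |- linear _ => first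
      [ apply: (bilinear_linearl _ H) | apply: (bilinear_linearr _ H) ]
  end.

#[export] Hint Extern 1 (tlinear ?D) =>
  match goal with H : is_hopf ?D _ _ |- _ => exact: hopf_D_lin H end : tlinear.
#[export] Hint Extern 1 (linear ?S) =>
  match goal with H : is_hopf _ _ ?S |- _ => exact: hopf_S_lin H end : linear.
#[export] Hint Extern 1 (tlinear ?rho) =>
  match goal with H : is_left_comodule_algebra _ _ ?rho |- _ => exact: lca_lin H end : tlinear.
#[export] Hint Extern 1 (tlinear ?phi) =>
  match goal with H : is_hopf_matched_pair _ _ _ _ _ ?phi |- _ => exact: rca_lin (hmp_phi H) end
  : tlinear.

Section HopfAlgebra.
Variables (k : fieldType) (A : algType k) (D : A -> seq (A * A)) (e : A -> k) (S : A -> A).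
Hypothesis HH : is_hopf D e S.

Lemma counitD a b : e (a + b) = e a + e b.
Proof. by have := hopf_e_lin HH 1 a b; rewrite scale1r mul1r. Qed.

Lemma counit0 : e 0 = 0.
Proof. by apply: (addrI (e 0)); rewrite addr0 -counitD addr0. Qed.

Lemma counitZ c a : e (c *: a) = c * e a.
Proof. by have := hopf_e_lin HH c a 0; rewrite addr0 counit0 addr0. Qed.

Lemma counit_sum I (s : seq I) (F : I -> A) : e (\sum_(i <- s) F i) = \sum_(i <- s) e (F i).
Proof.
elim: s => [|i s IHs]; first by rewrite !big_nil counit0.
by rewrite !big_cons counitD IHs.
Qed.

Section SumForms.
Variable V : lmodType k.

Lemma comul_coassoc a (f : A -> A -> A -> V) : trilinear_map f ->
  \sum_(p <- D a) \sum_(q <- D p.1) f q.1 q.2 p.2 =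
  \sum_(p <- D a) \sum_(q <- D p.2) f p.1 q.1 q.2.
Proof. by move=> lf; have := hopf_coassoc HH a lf; rewrite !big_allpairs_dep. Qed.

Lemma comulM a b (f : A -> A -> V) : bilinear_map f ->
  \sum_(p <- D (a * b)) f p.1 p.2 =
  \sum_(p <- D a) \sum_(q <- D b) f (p.1 * q.1) (p.2 * q.2).
Proof. by move=> lf; have := (hopf_D_alg HH).1 a b _ _ lf; rewrite big_allpairs_dep. Qed.

Lemma comul1 (f : A -> A -> V) : bilinear_map f -> \sum_(p <- D 1) f p.1 p.2 = f 1 1.
Proof. by move=> lf; have := (hopf_D_alg HH).2 _ _ lf; rewrite big_seq1. Qed.

End SumForms.

Lemma antipode1 : S 1 = 1.
Proof.
have := hopf_antipodel HH 1; rewrite (comul1 (f := fun u v => S u * v)); last by linearity.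
by rewrite mulr1 (hopf_e1 HH) scale1r.
Qed.

Lemma counit_antipode a : e (S a) = e a.
Proof.
have /(congr1 e) := hopf_antipodel HH a.
rewrite counitZ (hopf_e1 HH) mulr1 counit_sum => <-.
rewrite -{1}(hopf_counitr HH a) (linear_fun_sum (hopf_S_lin HH)) counit_sum.
by apply: eq_bigr => p _; rewrite (linear_funZ (hopf_S_lin HH)) counitZ (hopf_e_mul HH) mulrC.
Qed.

Lemma antipode_mul_expand x y : S x * S y =
  \sum_(p <- D x) \sum_(q <- D y) \sum_(u <- D p.1) \sum_(w <- D q.1)
     S u.1 * S w.1 * (u.2 * w.2 * S (p.2 * q.2)).
Proof.
have lS : linear S := hopf_S_lin HH.
have antipode_prod p q : S p.1 * S q.1 * (e (p.2 * q.2) *: 1) =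
    \sum_(u <- D p.2) \sum_(w <- D q.2) S p.1 * S q.1 * (u.1 * w.1 * S (u.2 * w.2)).
  rewrite -(hopf_antipoder HH) (comulM _ _ (f := fun u v => u * S v)); last by linearity.
  by rewrite mulr_sumr; under eq_bigr do rewrite mulr_sumr.
have -> : S x * S y = \sum_(p <- D x) \sum_(q <- D y) S p.1 * S q.1 * (e (p.2 * q.2) *: 1).
  rewrite -{1}(hopf_counitr HH x) -{1}(hopf_counitr HH y) !(linear_fun_sum lS) mulr_suml.
  apply: eq_bigr => p _; rewrite mulr_sumr; apply: eq_bigr => q _.
  by rewrite !(linear_funZ lS) (hopf_e_mul HH) -scalerAl -scalerAr mulr_algr scalerA.
under eq_bigr do under eq_bigr do rewrite antipode_prod.
under eq_bigr do rewrite exchange_big.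
rewrite -(comul_coassoc x (f := fun a b c => \sum_(q <- D y) \sum_(w <- D q.2)
   S a * S q.1 * (b * w.1 * S (c * w.2)))); last by linearity.
under eq_bigr => p _ do under eq_bigr => u _ do
  (rewrite -(comul_coassoc y (f := fun a b c => S u.1 * S a * (u.2 * b * S (p.2 * c))));
   last by linearity).
by under eq_bigr do rewrite exchange_big.
Qed.

End HopfAlgebra.

Section CommutativeHopf.
Variables (k : fieldType) (A : comAlgType k) (D : A -> seq (A * A)) (e : A -> k) (S : A -> A).
Hypothesis HH : is_hopf D e S.

Lemma antipodeM x y : S (x * y) = S x * S y.
Proof.
have lS : linear S := hopf_S_lin HH.
have antipodel_mul a b : \sum_(w <- D a) S w.1 * w.2 * b = e a *: b.
  by rewrite -mulr_suml (hopf_antipodel HH) -scalerAl mul1r.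
rewrite (antipode_mul_expand HH) -[in LHS](hopf_counitl HH x) mulr_suml (linear_fun_sum lS).
apply: eq_bigr => p _.
rewrite -[in LHS](hopf_counitl HH y) mulr_sumr (linear_fun_sum lS).
apply: eq_bigr => q _.
transitivity (\sum_(u <- D p.1) \sum_(w <- D q.1) S u.1 * u.2 * (S w.1 * w.2 * S (p.2 * q.2)));
  last by apply: eq_bigr => u _; apply: eq_bigr => w _; ring.
under eq_bigr do rewrite -mulr_sumr antipodel_mul.
by rewrite antipodel_mul -scalerAl -scalerAr !(linear_funZ lS).
Qed.

End CommutativeHopf.

Section Comodule.
Variables (k : fieldType) (H A : algType k) (D : H -> seq (H * H)) (e : H -> k) (S : H -> H).
Variable rho : A -> seq (H * A).
Hypotheses (HH : is_hopf D e S) (Hrho : is_left_comodule_algebra D e rho).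
Variable V : lmodType k.

Lemma coact_coassoc a (f : H -> H -> A -> V) : trilinear_map f ->
  \sum_(p <- rho a) \sum_(q <- D p.1) f q.1 q.2 p.2 =
  \sum_(p <- rho a) \sum_(q <- rho p.2) f p.1 q.1 q.2.
Proof. by move=> lf; have := lca_coassoc Hrho a lf; rewrite !big_allpairs_dep. Qed.

Lemma coactM a b (f : H -> A -> V) : bilinear_map f ->
  \sum_(p <- rho (a * b)) f p.1 p.2 =
  \sum_(p <- rho a) \sum_(q <- rho b) f (p.1 * q.1) (p.2 * q.2).
Proof. by move=> lf; have := (lca_alg Hrho).1 a b _ _ lf; rewrite big_allpairs_dep. Qed.

Lemma coact1 (f : H -> A -> V) : bilinear_map f -> \sum_(p <- rho 1) f p.1 p.2 = f 1 1.
Proof. by move=> lf; have := (lca_alg Hrho).2 _ _ lf; rewrite big_seq1. Qed.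

Lemma coact_counit_sum z (G : H -> A -> V) : bilinear_map G ->
  \sum_(q <- rho z) e q.1 *: G 1 q.2 = G 1 z.
Proof.
case=> _ lG; rewrite -[in RHS](lca_counit Hrho z) (linear_fun_sum (lG 1)).
by apply: eq_bigr => q _; rewrite (linear_funZ (lG 1)).
Qed.

Lemma coact_antipoder z (G : H -> A -> V) : bilinear_map G ->
  \sum_(q <- rho z) \sum_(r <- rho q.2) G (q.1 * S r.1) r.2 = G 1 z.
Proof.
move=> lG; rewrite -(coact_coassoc z (f := fun a b c => G (a * S b) c)); last by linearity.
have [lG1 _] := lG; rewrite -(coact_counit_sum z lG).
apply: eq_bigr => q _.
by rewrite -(linear_fun_sum (lG1 q.2)) (hopf_antipoder HH) (linear_funZ (lG1 q.2)).
Qed.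

Lemma coact_antipodel z (G : H -> A -> V) : bilinear_map G ->
  \sum_(q <- rho z) \sum_(r <- rho q.2) G (S q.1 * r.1) r.2 = G 1 z.
Proof.
move=> lG; rewrite -(coact_coassoc z (f := fun a b c => G (S a * b) c)); last by linearity.
have [lG1 _] := lG; rewrite -(coact_counit_sum z lG).
apply: eq_bigr => q _.
by rewrite -(linear_fun_sum (lG1 q.2)) (hopf_antipodel HH) (linear_funZ (lG1 q.2)).
Qed.

End Comodule.

Section BraceFromMatchedPair.
Variables (k : fieldType) (A : comAlgType k).
Variables (D' : A -> seq (A * A)) (e : A -> k) (T : A -> A) (rho phi : A -> seq (A * A)).
Hypotheses (HH : is_hopf D' e T) (HM : is_hopf_matched_pair D' e D' e rho phi).
Hypothesis HC : forall a : A,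
  teq2 (D' a) (flatten [seq [seq (u.1 * w.1, u.2 * w.2) | u <- rho p.1, w <- phi p.2] | p <- D' a]).

Let Hrho := hmp_rho HM.

Definition brace_comul (a : A) := [seq (p.1 * T q.1, q.2) | p <- D' a, q <- rho p.2].
Definition brace_antipode (a : A) := \sum_(q <- rho a) q.1 * T q.2.

Lemma brace_comul_tlinear : tlinear brace_comul.
Proof.
move=> c a b V f lf; rewrite big_cat big_map !big_allpairs_dep /=.
have lg : bilinear_map (fun u v : A => \sum_(q <- rho v) f (u * T q.1) q.2) by linearity.
rewrite (hopf_D_lin HH c a b lg).
rewrite big_cat big_map /=; congr (_ + _).
by apply: eq_bigr => p _; apply: eq_bigr => q _; rewrite scalerAl.
Qed.

#[local] Hint Resolve brace_comul_tlinear : tlinear.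

Section Twists.
Variable V : lmodType k.

Definition twist (g : A -> A -> V) x y := \sum_(r <- rho y) g (x * r.1) r.2.
Definition untwist (g : A -> A -> V) x y := \sum_(r <- rho y) g (x * T r.1) r.2.

Lemma twistK (g : A -> A -> V) : bilinear_map g -> forall x y, twist (untwist g) x y = g x y.
Proof.
move=> lg x y; rewrite /twist /untwist.
under eq_bigr do under eq_bigr do rewrite -mulrA.
by rewrite (coact_antipoder HH Hrho y (G := fun m v => g (x * m) v)) ?mulr1 //; linearity.
Qed.

Lemma untwistK (g : A -> A -> V) : bilinear_map g -> forall x y, untwist (twist g) x y = g x y.
Proof.
move=> lg x y; rewrite /twist /untwist.
under eq_bigr do under eq_bigr do rewrite -mulrA.
by rewrite (coact_antipodel HH Hrho y (G := fun m v => g (x * m) v)) ?mulr1 //; linearity.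
Qed.

Lemma brace_comul_sum (G : A * A -> V) a :
  \sum_(x <- brace_comul a) G x = \sum_(p <- D' a) \sum_(q <- rho p.2) G (p.1 * T q.1, q.2).
Proof. exact: big_allpairs_dep. Qed.

Lemma comul_twist (g : A -> A -> V) a : bilinear_map g ->
  \sum_(p <- D' a) g p.1 p.2 = \sum_(x <- brace_comul a) twist g x.1 x.2.
Proof. by move=> lg; rewrite brace_comul_sum; apply: eq_bigr => p _; rewrite -{1}(untwistK lg). Qed.

Lemma coact_comul a (f : A -> A -> A -> V) : trilinear_map f ->
  \sum_(p <- rho a) \sum_(q <- D' p.2) f p.1 q.1 q.2 =
  \sum_(p <- D' a) \sum_(v <- rho p.2) \sum_(u <- rho p.1) \sum_(w <- phi v.1)
     f (u.1 * w.1) (u.2 * w.2) v.2.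
Proof.
move=> lf; have := hm2 HM a lf; rewrite big_allpairs_dep big_flatten /= => ->.
rewrite big_allpairs_dep; apply: eq_bigr => p _; apply: eq_bigr => v _.
by rewrite big_allpairs_dep.
Qed.

Lemma comul_factor a (f : A -> A -> V) : bilinear_map f ->
  \sum_(p <- D' a) f p.1 p.2 =
  \sum_(p <- D' a) \sum_(u <- rho p.1) \sum_(w <- phi p.2) f (u.1 * w.1) (u.2 * w.2).
Proof.
move=> lf; rewrite (HC a lf) big_flatten /= big_map.
by apply: eq_bigr => p _; rewrite big_allpairs_dep.
Qed.

Lemma coact_comul_twist b (G : A -> A -> A -> V) : trilinear_map G ->
  \sum_(q <- rho b) \sum_(s <- D' q.2) G q.1 s.1 s.2 =
  \sum_(p <- brace_comul b) \sum_(u <- rho p.1) \sum_(w <- rho p.2) twist (G (u.1 * w.1)) u.2 w.2.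
Proof.
(* (HM2) on the left; on the right, coassociativity of ρ exposes Δ'(w_(-1)), which the
   factorization hypothesis splits through ρ and φ before multiplicativity of ρ
   recombines the factors. *)
move=> lG; rewrite coact_comul //.
rewrite (comul_twist b (g := fun a z => \sum_(s <- rho z) \sum_(u <- rho a) \sum_(w <- phi s.1)
   G (u.1 * w.1) (u.2 * w.2) s.2)); last by linearity.
apply: eq_bigr => p _; rewrite /twist /= exchange_big /=.
under [RHS]eq_bigr => u _ do rewrite exchange_big /=.
rewrite -(coact_coassoc Hrho p.2 (f := fun x y z =>
   \sum_(u <- rho p.1) G (u.1 * x) (u.2 * y) z)); last by linearity.
under [RHS]eq_bigr => w _ do (rewrite (comul_factor w.1 (f := fun a b =>
   \sum_(u <- rho p.1) G (u.1 * a) (u.2 * b) w.2)); last by linearity).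
under [RHS]eq_bigr => w _ do under eq_bigr => y _ do under eq_bigr => al _ do rewrite exchange_big.
under [RHS]eq_bigr => w _ do under eq_bigr => y _ do rewrite exchange_big.
under [RHS]eq_bigr => w _ do under eq_bigr => y _ do under eq_bigr => u _ do
  under eq_bigr => al _ do under eq_bigr => be _ do rewrite !mulrA.
under [RHS]eq_bigr => w _ do under eq_bigr => y _ do
  (rewrite -(coactM Hrho p.1 y.1 (f := fun a c =>
     \sum_(be <- phi y.2) G (a * be.1) (c * be.2) w.2)); last by linearity).
by rewrite (coact_coassoc Hrho p.2 (f := fun a c z =>
  \sum_(u <- rho (p.1 * a)) \sum_(be <- phi c) G (u.1 * be.1) (u.2 * be.2) z)) //; linearity.
Qed.

Lemma coact_brace_comul b (F : A -> A -> A -> V) : trilinear_map F ->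
  \sum_(q <- rho b) \sum_(r <- brace_comul q.2) F q.1 r.1 r.2 =
  \sum_(p <- brace_comul b) \sum_(u <- rho p.1) \sum_(w <- rho p.2) F (u.1 * w.1) u.2 w.2.
Proof.
move=> lF; under eq_bigr => q _ do rewrite brace_comul_sum.
rewrite (coact_comul_twist b (G := fun x => untwist (F x))); last by rewrite /untwist; linearity.
apply: eq_bigr => p _; apply: eq_bigr => u _; apply: eq_bigr => w _.
by rewrite twistK //; linearity.
Qed.

Definition diag_twist (f : A -> A -> A -> V) x y z :=
  \sum_(u <- rho y) \sum_(w <- rho z) f (x * u.1 * w.1) u.2 w.2.
Definition diag_untwist (f : A -> A -> A -> V) x y z :=
  \sum_(u <- rho y) \sum_(w <- rho z) f (x * T u.1 * T w.1) u.2 w.2.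

Lemma diag_twistK (f : A -> A -> A -> V) : trilinear_map f ->
  forall x y z, diag_twist (diag_untwist f) x y z = f x y z.
Proof.
move=> lf x y z; rewrite /diag_twist /diag_untwist.
have regroup p q r s : x * p * q * T r * T s = x * (p * T r) * (q * T s) by ring.
under eq_bigr do rewrite exchange_big.
under eq_bigr do under eq_bigr do under eq_bigr do under eq_bigr do rewrite regroup.
under eq_bigr => u _ do under eq_bigr => a _ do
  (rewrite (coact_antipoder HH Hrho z (G := fun m v => f (x * (u.1 * T a.1) * m) a.2 v));
   last by linearity).
under eq_bigr do under eq_bigr do rewrite mulr1.
by rewrite (coact_antipoder HH Hrho y (G := fun m v => f (x * m) v z)) ?mulr1 //; linearity.
Qed.

Definition twist3 (f : A -> A -> A -> V) x := diag_twist (fun x' => twist (f x')) x.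
Definition untwist3 (f : A -> A -> A -> V) x := untwist (diag_untwist f x).

Lemma twist3K (f : A -> A -> A -> V) : trilinear_map f ->
  forall x y z, twist3 (untwist3 f) x y z = f x y z.
Proof.
move=> lf x y z; rewrite -[RHS](diag_twistK lf) /twist3 /untwist3 /diag_twist.
apply: eq_bigr => u _; apply: eq_bigr => w _.
by rewrite twistK //; rewrite /diag_untwist; linearity.
Qed.

Lemma coassoc_twist_r a (g : A -> A -> A -> V) : trilinear_map g ->
  \sum_(p <- brace_comul a) \sum_(q <- brace_comul p.2) twist3 g p.1 q.1 q.2 =
  \sum_(p <- D' a) \sum_(r <- D' p.2) g p.1 r.1 r.2.
Proof.
move=> lg; rewrite (comul_twist a (g := fun x y => \sum_(r <- D' y) g x r.1 r.2)); last by linearity.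
apply: eq_bigr => p _; rewrite [RHS]/twist /=.
have comul_twist_g x y : \sum_(r <- D' y) g x r.1 r.2 =
    \sum_(q <- brace_comul y) twist (g x) q.1 q.2 by apply: comul_twist; linearity.
under [RHS]eq_bigr do rewrite comul_twist_g.
rewrite (coact_brace_comul p.2 (F := fun x y z => twist (g (p.1 * x)) y z)); last first.
  by rewrite /twist; linearity.
apply: eq_bigr => q _; apply: eq_bigr => u _; apply: eq_bigr => w _.
by rewrite mulrA.
Qed.

Lemma coassoc_twist_l a (g : A -> A -> A -> V) : trilinear_map g ->
  \sum_(p <- brace_comul a) \sum_(q <- brace_comul p.1) twist3 g q.1 q.2 p.2 =
  \sum_(p <- D' a) \sum_(r <- D' p.1) g r.1 r.2 p.2.
Proof.
move=> lg; rewrite (comul_twist a (g := fun x z => \sum_(r <- D' x) g r.1 r.2 z)); last by linearity.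
apply: eq_bigr => p _; rewrite [RHS]/twist /=.
under [RHS]eq_bigr => be _ do (rewrite (comulM HH p.1 be.1 (f := fun x y => g x y be.2));
  last by linearity).
under [RHS]eq_bigr => be _ do rewrite exchange_big.
rewrite (coact_coassoc Hrho p.2 (f := fun x y z =>
  \sum_(r <- D' p.1) g (r.1 * x) (r.2 * y) z)); last by linearity.
have comul_twist_g b s : \sum_(r <- D' p.1) g (r.1 * b) (r.2 * s.1) s.2 =
    \sum_(q <- brace_comul p.1) \sum_(al <- rho q.2) g (q.1 * al.1 * b) (al.2 * s.1) s.2.
  rewrite (comul_twist p.1 (g := fun x y => g (x * b) (y * s.1) s.2)); last by linearity.
  by apply: eq_bigr => q _; rewrite /twist.
under [RHS]eq_bigr => be _ do under eq_bigr => s _ do rewrite comul_twist_g.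
rewrite /twist3 /diag_twist /twist /=.
under [RHS]eq_bigr => be _ do rewrite exchange_big.
rewrite exchange_big; apply: eq_bigr => q _ /=.
under [RHS]eq_bigr => be _ do rewrite exchange_big.
by rewrite exchange_big.
Qed.

Lemma brace_comul_coassoc a (f : A -> A -> A -> V) : trilinear_map f ->
  \sum_(p <- brace_comul a) \sum_(q <- brace_comul p.1) f q.1 q.2 p.2 =
  \sum_(p <- brace_comul a) \sum_(q <- brace_comul p.2) f p.1 q.1 q.2.
Proof.
move=> lf; have lg : trilinear_map (untwist3 f).
  by rewrite /untwist3 /untwist /diag_untwist; linearity.
under eq_bigr do under eq_bigr do rewrite -(twist3K lf).
under [RHS]eq_bigr do under eq_bigr do rewrite -(twist3K lf).
by rewrite coassoc_twist_l // coassoc_twist_r // (comul_coassoc HH).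
Qed.

End Twists.

Lemma brace_counitl a : \sum_(x <- brace_comul a) e x.1 *: x.2 = a.
Proof.
rewrite brace_comul_sum.
under eq_bigr do under eq_bigr do rewrite /= (hopf_e_mul HH) (counit_antipode HH) -scalerA.
under eq_bigr do rewrite -scaler_sumr (lca_counit Hrho).
by rewrite (hopf_counitl HH).
Qed.

Lemma brace_counitr a : \sum_(x <- brace_comul a) e x.2 *: x.1 = a.
Proof.
have lT := hopf_S_lin HH; rewrite brace_comul_sum.
under eq_bigr do under eq_bigr do rewrite /= scalerAr -(linear_funZ lT).
under eq_bigr do rewrite -mulr_sumr -(linear_fun_sum lT) (hm1a HM) (linear_funZ lT)
  (antipode1 HH) -scalerAr mulr1.
by rewrite (hopf_counitr HH).
Qed.

Lemma brace_comulM (V : lmodType k) a b (f : A -> A -> V) : bilinear_map f ->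
  \sum_(x <- brace_comul (a * b)) f x.1 x.2 =
  \sum_(x <- brace_comul a) \sum_(y <- brace_comul b) f (x.1 * y.1) (x.2 * y.2).
Proof.
move=> lf; rewrite brace_comul_sum.
rewrite (comulM HH a b (f := fun u v => \sum_(q <- rho v) f (u * T q.1) q.2)) /=; last by linearity.
under eq_bigr => p _ do under eq_bigr => p' _ do
  (rewrite (coactM Hrho p.2 p'.2 (f := fun u v => f (p.1 * p'.1 * T u) v)); last by linearity).
rewrite brace_comul_sum; under [RHS]eq_bigr do under eq_bigr do rewrite brace_comul_sum.
under [RHS]eq_bigr do rewrite exchange_big.
apply: eq_bigr => p _; apply: eq_bigr => p' _; apply: eq_bigr => q _; apply: eq_bigr => q' _.
by rewrite /= (antipodeM HH); congr (f _ _); ring.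
Qed.

Lemma brace_comul1 (V : lmodType k) (f : A -> A -> V) : bilinear_map f ->
  \sum_(x <- brace_comul 1) f x.1 x.2 = f 1 1.
Proof.
move=> lf; rewrite brace_comul_sum.
rewrite (comul1 HH (f := fun u v => \sum_(q <- rho v) f (u * T q.1) q.2)); last by linearity.
by rewrite (coact1 Hrho (f := fun u v => f (1 * T u) v)) ?(antipode1 HH) ?mulr1 //; linearity.
Qed.

Lemma brace_antipode_linear : linear brace_antipode.
Proof. by rewrite /brace_antipode; linearity. Qed.

#[local] Hint Resolve brace_antipode_linear : linear.

Lemma brace_antipodeM x y : brace_antipode (x * y) = brace_antipode x * brace_antipode y.
Proof.
rewrite /brace_antipode (coactM Hrho x y (f := fun u v => u * T v)); last by linearity.
rewrite mulr_suml; apply: eq_bigr => q _; rewrite mulr_sumr; apply: eq_bigr => r _.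
by rewrite (antipodeM HH); ring.
Qed.

Lemma brace_antipode1 : brace_antipode 1 = 1.
Proof.
by rewrite /brace_antipode (coact1 Hrho (f := fun u v => u * T v)) ?(antipode1 HH) ?mulr1 //;
  linearity.
Qed.

Lemma brace_antipoder a : \sum_(x <- brace_comul a) x.1 * brace_antipode x.2 = e a *: 1.
Proof.
rewrite brace_comul_sum /brace_antipode /=.
have regroup (p t r s : A) : p * t * (r * s) = p * (t * r) * s by ring.
under eq_bigr do under eq_bigr do rewrite mulr_sumr.
under eq_bigr do under eq_bigr do under eq_bigr do rewrite regroup.
under eq_bigr => p _ do
  (rewrite (coact_antipodel HH Hrho p.2 (G := fun m v => p.1 * m * T v)); last by linearity).
under eq_bigr do rewrite mulr1.
by rewrite (hopf_antipoder HH).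
Qed.

Lemma brace_antipodeK a : brace_antipode (brace_antipode a) = a.
Proof.
have lS := brace_antipode_linear; have lSS := linear_comp lS lS.
rewrite -{1}(brace_counitl a) (linear_fun_sum lSS).
under eq_bigr => x _ do rewrite (linear_funZ lSS)
  -(mul1r (brace_antipode (brace_antipode x.2))) scalerAl -brace_antipoder mulr_suml.
rewrite (brace_comul_coassoc a
  (f := fun u v w => u * brace_antipode v * brace_antipode (brace_antipode w))); last by linearity.
under eq_bigr do under eq_bigr do rewrite -mulrA -brace_antipodeM.
under eq_bigr do rewrite -mulr_sumr -(linear_fun_sum lS) brace_antipoder (linear_funZ lS)
  brace_antipode1 -scalerAr mulr1.
exact: brace_counitr.
Qed.

Lemma brace_antipodel a : \sum_(x <- brace_comul a) brace_antipode x.1 * x.2 = e a *: 1.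
Proof.
have lS := brace_antipode_linear.
under eq_bigr => x _ do rewrite -(brace_antipodeK x.2) -brace_antipodeM.
by rewrite -(linear_fun_sum lS) brace_antipoder (linear_funZ lS) brace_antipode1.
Qed.

Lemma brace_is_hopf : is_hopf brace_comul e brace_antipode.
Proof.
split.
- exact: brace_comul_tlinear.
- move=> a V f lf.
  by rewrite [LHS]big_allpairs_dep [RHS]big_allpairs_dep /=; apply: brace_comul_coassoc.
- exact: hopf_e_lin HH.
- exact: brace_counitl.
- exact: brace_counitr.
- split=> [a b V f lf | V f lf]; last by rewrite big_seq1 brace_comul1.
  by rewrite /tmul [RHS]big_allpairs_dep brace_comulM.
- exact: hopf_e_mul HH.
- exact: hopf_e1 HH.
- exact: brace_antipode_linear.
- exact: brace_antipodel.
- exact: brace_antipoder.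
Qed.

Section Compatibility.
Variable V : lmodType k.

Lemma brace_antipodel_lin c (G : A -> V) : linear G ->
  \sum_(y <- brace_comul c) G (brace_antipode y.1 * y.2) = e c *: G 1.
Proof. by move=> lG; rewrite -(linear_fun_sum lG) brace_antipodel (linear_funZ lG). Qed.

Lemma brace_counitl_lin c (K : A -> V) : linear K ->
  \sum_(q <- brace_comul c) e q.1 *: K q.2 = K c.
Proof.
move=> lK; rewrite -{2}(brace_counitl c) (linear_fun_sum lK).
by apply: eq_bigr => q _; rewrite (linear_funZ lK).
Qed.

Lemma brace_antipode_comul c (F : A -> A -> V) : bilinear_map F ->
  \sum_(q <- brace_comul c) \sum_(w <- D' q.2) F (brace_antipode q.1 * w.1) w.2 =
  \sum_(r <- rho c) F r.1 r.2.
Proof.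
move=> lF.
have twistF x y : \sum_(w <- D' y) F (brace_antipode x * w.1) w.2 =
    \sum_(q <- brace_comul y) twist (fun a b => F (brace_antipode x * a) b) q.1 q.2.
  by apply: comul_twist; linearity.
under eq_bigr do rewrite twistF.
rewrite -(brace_comul_coassoc c (f := fun x a b =>
  twist (fun a' b' => F (brace_antipode x * a') b') a b)); last by rewrite /twist; linearity.
rewrite /twist /=.
under eq_bigr do rewrite exchange_big /=.
under eq_bigr do under eq_bigr do under eq_bigr do rewrite mulrA.
under eq_bigr => p _ do under eq_bigr => r _ do
  (rewrite (brace_antipodel_lin p.1 (G := fun m => F (m * r.1) r.2)); last by linearity).
under eq_bigr do rewrite -scaler_sumr.
rewrite (brace_counitl_lin c (K := fun z => \sum_(r <- rho z) F (1 * r.1) r.2)); last by linearity.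
by apply: eq_bigr => r _; rewrite mul1r.
Qed.

Lemma comul_brace_comul h (f : A -> A -> A -> V) : trilinear_map f ->
  \sum_(p <- D' h) \sum_(q <- brace_comul p.2) f p.1 q.1 q.2 =
  \sum_(p <- brace_comul h) \sum_(q <- brace_comul p.2) diag_twist f p.1 q.1 q.2.
Proof.
move=> lf; rewrite (comul_twist h (g := fun x y => \sum_(q <- brace_comul y) f x q.1 q.2));
  last by linearity.
apply: eq_bigr => p _; rewrite /twist /diag_twist /=.
rewrite (coact_brace_comul p.2 (F := fun x y z => f (p.1 * x) y z)); last by linearity.
by apply: eq_bigr => q _; apply: eq_bigr => u _; apply: eq_bigr => w _; rewrite mulrA.
Qed.

Lemma brace_comul_antipode_comul h (f : A -> A -> A -> V) : trilinear_map f ->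
  \sum_(p <- brace_comul h) \sum_(q <- brace_comul p.1) \sum_(u <- D' q.1) \sum_(w <- D' p.2)
     f (u.1 * brace_antipode q.2 * w.1) u.2 w.2 =
  \sum_(p <- brace_comul h) \sum_(q <- brace_comul p.2) diag_twist f p.1 q.1 q.2.
Proof.
move=> lf; rewrite (brace_comul_coassoc h (f := fun a b c => \sum_(u <- D' a) \sum_(w <- D' c)
  f (u.1 * brace_antipode b * w.1) u.2 w.2)); last by linearity.
under eq_bigr do rewrite exchange_big /=.
under eq_bigr do under eq_bigr do under eq_bigr do under eq_bigr do rewrite -mulrA.
under eq_bigr => p _ do under eq_bigr => u _ do
  (rewrite (brace_antipode_comul p.2 (F := fun m v => f (u.1 * m) u.2 v)); last by linearity).
under eq_bigr => p _ do (rewrite (comul_twist p.1 (g := fun x y =>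
  \sum_(r <- rho p.2) f (x * r.1) y r.2)); last by linearity).
rewrite -(brace_comul_coassoc h (f := diag_twist f)); last by rewrite /diag_twist; linearity.
by apply: eq_bigr => p _; apply: eq_bigr => q _; rewrite /twist /diag_twist.
Qed.

End Compatibility.

Lemma brace_compatibility h :
  teq3 [seq (p.1, q.1, q.2) | p <- D' h, q <- brace_comul p.2]
       (flatten [seq [seq (u.1 * brace_antipode t.1.2 * w.1, u.2, w.2)
                       | u <- D' t.1.1, w <- D' t.2]
                | t <- [seq (q.1, q.2, p.2) | p <- brace_comul h, q <- brace_comul p.1]]).
Proof.
move=> V f lf; rewrite big_allpairs_dep big_flatten big_map big_allpairs_dep /=.
under [RHS]eq_bigr do under eq_bigr do rewrite big_allpairs_dep /=.
by rewrite comul_brace_comul // brace_comul_antipode_comul.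
Qed.

End BraceFromMatchedPair.

Theorem proposition3p4 (k : fieldType) (A : comAlgType k)
  (D' : A -> seq (A * A)) (e : A -> k) (T : A -> A)
  (rho : A -> seq (A * A)) (phi : A -> seq (A * A)) :
  is_hopf D' e T ->
  is_hopf_matched_pair D' e D' e rho phi ->
  (forall a : A,
     teq2 (D' a)
          (flatten [seq [seq (u.1 * w.1, u.2 * w.2) | u <- rho p.1, w <- phi p.2]
                   | p <- D' a])) ->
  is_commutative_hopf_brace
    (fun a : A => [seq (p.1 * T q.1, q.2) | p <- D' a, q <- rho p.2])
    (fun a : A => \sum_(q <- rho a) q.1 * T q.2)
    D' T e.
Proof.
move=> HH HM HC.
change (is_commutative_hopf_brace (brace_comul D' T rho) (brace_antipode T rho) D' T e).
split; last exact: mulrC.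
split; first exact: brace_is_hopf HH HM HC.
by split; [exact: HH | exact: brace_compatibility HH HM HC].
Qed.
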